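(* Fix $k, n \in \mathbb{N}$. The number of permutations $w \in S_{kn+k-1}$ with exactly $n$ descents such that ${\rm ad}(w)$ is a $(k-1)$-ballot sequence equals $\frac{1}{n+1} A_{n,kn+k-1}$. In particular, the number of Dyck permutations in $S_{2n+1}$ is the Eulerian-Catalan number $EC_n = \frac{1}{n+1}A_{n,2n+1}$.
   Context: $A_{m,n}$ denotes the Eulerian number: the number of permutations of $[n]$ with exactly $m$ descents. For a permutation $w = w_1\cdots w_m$, ${\rm ad}(w)$ is the $0/1$ sequence of length $m-1$ with ${\rm ad}(w)_i = 0$ if $w_i < w_{i+1}$ and $1$ if $w_i > w_{i+1}$. A $0/1$ sequence is an $r$-ballot sequence if every initial segment contains at least $r$ times as many $0$'s as $1$'s. A permutation $w \in S_{2n+1}$ is a Dyck permutation if the lattice path $L(w)$ — starting at $(0,0)$, with $i$-th step $(1,0)$ if $w_i<w_{i+1}$ and $(0,1)$ if $w_i>w_{i+1}$ — ends at $(n,n)$ and all its points satisfy $y \leq x$ (equivalently, $w$ has $n$ descents and ${\rm ad}(w)$ is a $1$-ballot sequence). *)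

From mathcomp Require Import all_boot all_fingroup.
Set Implicit Arguments. Unset Strict Implicit. Unset Printing Implicit Defensive.

Definition word (N : nat) (w : 'S_N) : seq nat := [seq val (w i) | i <- enum 'I_N].

(* ad(s): 0/1 sequence of length |s|-1; [true] encodes 1 (a descent s_i > s_{i+1}),
   [false] encodes 0 (an ascent). *)
Definition ad (s : seq nat) : seq bool :=
  [seq nth 0 s i.+1 < nth 0 s i | i <- iota 0 (size s).-1].

Definition des (N : nat) (w : 'S_N) : nat := count id (ad (word w)).

Definition ballot (r : nat) (b : seq bool) : bool :=
  [forall j : 'I_(size b).+1,
     r * count id (take j b) <= count negb (take j b)].

Definition eulerian (m N : nat) : nat := #|[set w : 'S_N | des w == m]|.

Definition lpath (b : seq bool) : seq (nat * nat) :=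
  (0, 0) :: [seq (count negb (take j b), count id (take j b)) | j <- iota 1 (size b)].

Definition dyck (n : nat) (w : 'S_(2 * n + 1)) : bool :=
  (last (0, 0) (lpath (ad (word w))) == (n, n))
  && all (fun p : nat * nat => p.2 <= p.1) (lpath (ad (word w))).

From mathcomp Require Import all_boot all_order all_fingroup all_algebra zify.
Set Implicit Arguments. Unset Strict Implicit. Unset Printing Implicit Defensive.
Import Order.TTheory GRing.Theory Num.Theory.

(* Put M := N + 1 = k (n + 1) and prepend the value 0 to w, read as a cyclic
   word u over Z_M; u then has n + 1 cyclic descents (the n descents of w and
   the final drop back to 0).  Weight an ascent by +1 and a descent by 1 - k:
   the height function of u is M-periodic, and w is (k-1)-ballot exactly when
   position 0 is the unique strict minimum of the height.  Z_M acts on such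
   words by adding t to every value (mod M) and rotating the new 0 to the
   front.  As t runs once around Z_M the minimum of the height drops by k in
   total, one unit at a time, and it drops precisely at the shifts whose new
   front is the strict minimum; so exactly k of the M shifts of every u are
   ballot.  Counting pairs gives M #{ballot} = k A(n, N), i.e.
   (n + 1) #{ballot} = A(n, N). *)

Lemma modnD_lt (M a b : nat) : a < M -> b < M ->
  (a + b) %% M = if M <= a + b then a + b - M else a + b.
Proof.
move=> ltaM ltbM; case: leqP => leM; last by rewrite modn_small.
by rewrite -[in LHS](subnK leM) modnDr modn_small //; lia.
Qed.

Definition step_weight (k : nat) (descent : bool) : int :=
  if descent then (1 - k%:Z)%R else 1%R.

Definition is_min_on (M : nat) (f : nat -> int) (m : int) : Prop :=
  (exists2 y, y < M & f y = m) /\ (forall y, y < M -> (m <= f y)%R).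

Lemma is_min_on_exists M f : 0 < M -> exists m, is_min_on M f m.
Proof.
elim: M => // [[|M]] IH _.
  by exists (f 0); split=> [|y]; [exists 0 | rewrite ltnS leqn0 => /eqP ->].
have [m [[y ltyM fy] fm]] := IH isT.
have [fMm|mfM] := ltrP (f M.+1) m.
  exists (f M.+1); split=> [|z]; first by exists M.+1.
  by rewrite ltnS leq_eqVlt => /orP[/eqP -> //|/fm]; lia.
exists m; split=> [|z]; first by exists y => //; lia.
by rewrite ltnS leq_eqVlt => /orP[/eqP -> //|/fm].
Qed.

Lemma is_min_on_unique M f m1 m2 : is_min_on M f m1 -> is_min_on M f m2 -> m1 = m2.
Proof.
move=> [[y1 lty1 <-] min1] [[y2 lty2 <-] min2].
by apply/eqP; rewrite eq_le min1 ?min2.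
Qed.

Section PeriodicInjective.

Variables (M : nat) (a : nat -> nat).
Hypothesis M_gt1 : 1 < M.
Hypothesis a_mod : forall x, a x = a (x %% M).
Hypothesis a_inj : forall x y, x < M -> y < M -> a x = a y -> x = y.

Lemma periodic_inj_eqmod x y : a x = a y -> x = y %[mod M].
Proof.
by rewrite a_mod (a_mod y) => /a_inj; apply; rewrite ltn_mod; lia.
Qed.

Lemma periodic_inj_succ_neq x : a x.+1 != a x.
Proof.
apply/eqP => /periodic_inj_eqmod /eqP.
by rewrite -addn1 -{2}(addn0 x) eqn_modDl mod0n modn_small.
Qed.

End PeriodicInjective.

(* [a] is a cyclic word with distinct values in [0, M) and [F] its height.
   Up to an additive constant, [shifted_height t] is the height of the word
   [(a x + t) %% M], in which the entries that wrap round lose [k]; [P t] is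
   the position of the entry that [+ t] sends to [0]. *)
Section CycleLemma.

Variables (M k : nat) (a : nat -> nat) (F : nat -> int) (P : nat -> nat).

Definition shifted_height (t x : nat) : int :=
  (F x - (if (M <= a x + t)%N then k%:Z else 0))%R.

Definition strict_min_at (t : nat) : bool :=
  [forall x : 'I_M, (val x != P t) ==> (shifted_height t (P t) < shifted_height t x)%R].

Hypothesis M_gt1 : 1 < M.
Hypothesis k_gt0 : 0 < k.
Hypothesis a_lt : forall x, a x < M.
Hypothesis a_mod : forall x, a x = a (x %% M).
Hypothesis a_inj : forall x y, x < M -> y < M -> a x = a y -> x = y.
Hypothesis F_step : forall x, F x.+1 = (F x + step_weight k (a x.+1 < a x)%N)%R.
Hypothesis F_mod : forall x, F x = F (x %% M).
Hypothesis P_lt : forall t, P t < M.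
Hypothesis a_P : forall t, a (P t) = (M - t) %% M.

Lemma shifted_height_mod t x : shifted_height t x = shifted_height t (x %% M).
Proof. by rewrite /shifted_height -F_mod -a_mod. Qed.

Lemma a_P_succ t : t < M -> a (P t.+1) = M - t.+1.
Proof. by move=> ltM; rewrite a_P modn_small //; lia. Qed.

Lemma shifted_heightS_neq t x : t < M -> x < M -> x != P t.+1 ->
  shifted_height t.+1 x = shifted_height t x.
Proof.
move=> ltM ltx neqx; have := a_lt x.
have : a x != M - t.+1.
  by rewrite -a_P_succ //; apply: contra neqx => /eqP /a_inj ->.
by rewrite /shifted_height; do 2!case: ifP; lia.
Qed.

Lemma shifted_heightS_eq t : t < M ->
  shifted_height t.+1 (P t.+1) = (shifted_height t (P t.+1) - k%:Z)%R.
Proof.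
by move=> ltM; rewrite /shifted_height a_P_succ //; do 2!case: ifP; lia.
Qed.

(* The entry at [P t.+1] is the largest one after shifting by [t], so a
   descent follows it. *)
Lemma shifted_height_after_top t : t < M ->
  shifted_height t (P t.+1).+1 = (shifted_height t (P t.+1) + 1 - k%:Z)%R.
Proof.
move=> ltM; have := periodic_inj_succ_neq M_gt1 a_mod a_inj (P t.+1); have := a_lt (P t.+1).+1.
rewrite /shifted_height F_step /step_weight a_P_succ //.
by do !case: ifP; lia.
Qed.

Lemma min_shifted_heightS t m : t < M -> is_min_on M (shifted_height t) m ->
  is_min_on M (shifted_height t.+1) (if strict_min_at t.+1 then m - 1 else m)%R.
Proof.
move=> ltM [[y0 lty0 hy0] minm]; set p := P t.+1.
have ltp : p < M := P_lt t.+1.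
have unchanged x : x < M -> x != p -> shifted_height t.+1 x = shifted_height t x.
  exact: shifted_heightS_neq.
have after_p : (m <= shifted_height t p.+1)%R.
  by rewrite shifted_height_mod; apply: minm; rewrite ltn_mod; lia.
have drop_p : shifted_height t.+1 p = (shifted_height t p - k%:Z)%R.
  exact: shifted_heightS_eq.
have next_p : shifted_height t p.+1 = (shifted_height t p + 1 - k%:Z)%R.
  exact: shifted_height_after_top.
have [newmin | oldmin] := ltrP (shifted_height t.+1 p) m.
  have -> : strict_min_at t.+1.
    apply/forallP => x; apply/implyP => neqx.
    by rewrite -/p [X in (_ < X)%R]unchanged //; have := minm x (ltn_ord x); lia.
  split=> [|y lty]; first by exists p => //; lia.
  by have [->|neqy] := eqVneq y p; [lia | rewrite unchanged //; have := minm y lty; lia].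
have neqy0 : y0 != p by apply/eqP => ey0; move: oldmin drop_p hy0; rewrite ey0; lia.
have -> : strict_min_at t.+1 = false.
  apply/negbTE/forallP => /(_ (Ordinal lty0)) /implyP /(_ neqy0).
  by rewrite /= -/p [X in (_ < X)%R]unchanged //; lia.
split=> [|y lty]; first by exists y0; rewrite ?unchanged //; lia.
by have [->|neqy] := eqVneq y p; [lia | rewrite unchanged //; have := minm y lty; lia].
Qed.

(* The minimum of the shifted height drops by one exactly at the shifts where
   the new zero is the strict minimum, and by [k] over a full period. *)
Lemma sum_strict_min_at : \sum_(t < M) (strict_min_at t : nat) = k.
Proof.
have [m0 min0] := is_min_on_exists (shifted_height 0) (ltnW M_gt1).
have minT T : T <= M -> is_min_on M (shifted_height T)
    (m0 - (\sum_(0 <= t < T) (strict_min_at t.+1 : nat))%:Z)%R.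
  elim: T => [|T IH] leTM; first by rewrite big_geq // subr0.
  rewrite big_nat_recr //= PoszD opprD addrA.
  have := min_shifted_heightS (_ : T < M) (IH (ltnW leTM)).
  by case: (strict_min_at T.+1); rewrite ?subr0; apply.
have height_M y : y < M -> shifted_height M y = (shifted_height 0 y - k%:Z)%R.
  by move=> lty; rewrite /shifted_height; have := a_lt y; do !case: ifP; lia.
have minM : is_min_on M (shifted_height M) (m0 - k%:Z)%R.
  case: min0 => [[y lty <-] minm]; split=> [|z ltz]; first by exists y; rewrite ?height_M.
  by rewrite height_M //; have := minm z ltz; lia.
have PM : P M = P 0 by apply: a_inj; rewrite ?P_lt // !a_P subn0 subnn modnn mod0n.
have strictM : strict_min_at M = strict_min_at 0.
  apply: eq_forallb => x; rewrite PM !height_M ?P_lt //.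
  by rewrite ltrD2r.
have M_pos : 0 < M := ltnW M_gt1.
have sum_shift : \sum_(0 <= t < M) (strict_min_at t.+1 : nat) = k.
  by have := is_min_on_unique (minT M (leqnn M)) minM; lia.
move: sum_shift; rewrite -(prednK M_pos) big_nat_recr //= prednK // strictM => <-.
rewrite -(big_mkord xpredT (fun t => (strict_min_at t : nat))).
by rewrite -{1}(prednK M_pos) big_nat_recl // addnC.
Qed.

End CycleLemma.

Lemma sum_in_bij (T : finType) (E : {set T}) (f : T -> T) (F : T -> nat) :
  {in E, forall x, f x \in E} -> {in E &, injective f} ->
  \sum_(x in E) F (f x) = \sum_(x in E) F x.
Proof.
move=> fE f_inj; have imE : f @: E = E.
  apply/eqP; rewrite eqEcard card_in_imset // leqnn andbT.
  by apply/subsetP => _ /imsetP [x xE ->]; apply: fE.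
by rewrite -[in RHS]imE big_imset.
Qed.

Section CyclicPermutations.

Variable N : nat.
Local Notation M := N.+1.
Implicit Types (u v : 'S_M) (t : 'I_M).

Definition cval u (x : nat) : nat := val (u (inZp x)).

Definition cdescent u (x : nat) : bool := cval u x.+1 < cval u x.

Definition height k u (j : nat) : int := \sum_(0 <= i < j) step_weight k (cdescent u i).

Definition cdes u : nat := count (cdescent u) (iota 0 M).

Definition cballot k u : bool :=
  [forall j : 'I_M, (0 < val j) ==> (0 < height k u j)%R].

Definition zero_pos u (t : nat) : 'I_M := (u^-1)%g (inZp (M - t)).

Definition add_perm (c : 'I_M) : 'S_M := perm (@addIr _ c).

(* [x |-> u (x + zero_pos u t) + t]: permutation products compose left to right. *)
Definition cshift u t : 'S_M := (add_perm (zero_pos u t) * u * add_perm t)%g.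

Lemma cval_mod u x : cval u x = cval u (x %% M).
Proof. by rewrite /cval; congr (val (u _)); apply: val_inj; rewrite /= modn_mod. Qed.

Lemma cval_lt u x : cval u x < M.
Proof. exact: ltn_ord. Qed.

Lemma cval_inj u x y : x < M -> y < M -> cval u x = cval u y -> x = y.
Proof. by move=> ltx lty /val_inj /perm_inj /(congr1 val) /=; rewrite !modn_small. Qed.

Lemma height_step k u x : height k u x.+1 = (height k u x + step_weight k (cdescent u x))%R.
Proof. by rewrite /height big_nat_recr. Qed.

Lemma height_count k u j : height k u j = (j%:Z - (k * count (cdescent u) (iota 0 j))%:Z)%R.
Proof.
elim: j => [|j IH]; first by rewrite /height big_geq //=; lia.
rewrite height_step IH -addn1 iotaD count_cat /= addn0 /step_weight.
by case: (cdescent u j) => /=; lia.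
Qed.

Lemma cdescent_periodic u i : cdescent u (M + i) = cdescent u i.
Proof. by rewrite /cdescent cval_mod (cval_mod u (M + i)) -addnS !modnDl -!cval_mod. Qed.

Lemma height_mod k n u : M = k * n.+1 -> cdes u = n.+1 ->
  forall x, height k u x = height k u (x %% M).
Proof.
move=> Mkn cdes_u.
have period y : height k u (M + y) = height k u y.
  rewrite !height_count iotaD count_cat.
  have -> : count (cdescent u) (iota M y) = count (cdescent u) (iota 0 y).
    by rewrite -(addn0 M) iotaDl count_map; apply: eq_count => i /=; rewrite cdescent_periodic.
  by move: cdes_u; rewrite /cdes => ->; lia.
move=> x; rewrite {1}(divn_eq x M).
by elim: (x %/ M) => [|q IH]; rewrite ?mul0n ?add0n // mulSn -addnA period.
Qed.

Lemma cval_zero_pos u (s : nat) : cval u (zero_pos u s) = (M - s) %% M.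
Proof. by rewrite /cval /zero_pos valZpK permKV. Qed.

Lemma cval_cshift u t x :
  cval (cshift u t) x = (cval u (zero_pos u t + x) + t) %% M.
Proof.
rewrite /cval /cshift !permM !permE /=; congr ((val (u _) + _) %% _).
by apply: val_inj; rewrite /= modnDml addnC.
Qed.

Lemma cshift0 u t : cshift u t ord0 = ord0.
Proof.
have -> : ord0 = inZp 0 :> 'I_M by apply: val_inj.
apply: val_inj; rewrite -[val (cshift u t _)]/(cval (cshift u t) 0).
by rewrite cval_cshift addn0 cval_zero_pos /= modnDml subnK ?modnn // ltnW.
Qed.

Lemma cshift_inj t u v :
  u ord0 = ord0 -> v ord0 = ord0 -> cshift u t = cshift v t -> u = v.
Proof.
move=> u0 v0 eq_uv.
have at_zero (w : 'S_M) : w ord0 = ord0 -> cshift w t (- zero_pos w t)%R = t.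
  by move=> w0; rewrite !permM !permE addNr [w _]w0 add0r.
have eq_pos : zero_pos u t = zero_pos v t.
  by apply: oppr_inj; apply: (@perm_inj _ (cshift u t)); rewrite at_zero // eq_uv at_zero.
by move: eq_uv; rewrite /cshift eq_pos => /mulIg /mulgI.
Qed.

Lemma cval_succ_neq u x : 0 < N -> cval u x.+1 != cval u x.
Proof.
by move=> N_gt0; apply: periodic_inj_succ_neq (@cval_mod u) (@cval_inj u) x.
Qed.

Local Notation sheight k u t := (shifted_height M k (cval u) (height k u) t).

Lemma step_weight_cshift k u t i : 0 < N ->
  step_weight k (cdescent (cshift u t) i) =
  (sheight k u t (zero_pos u t + i).+1 - sheight k u t (zero_pos u t + i))%R.
Proof.
move=> N_gt0; rewrite /cdescent !cval_cshift /shifted_height height_step addnS.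
have := cval_succ_neq u (zero_pos u t + i) N_gt0.
have := cval_lt u (zero_pos u t + i); have := cval_lt u (zero_pos u t + i).+1.
have := ltn_ord t; rewrite /step_weight /cdescent.
move: (cval u _) (cval u _) => y x ltt lty ltx neq_yx.
by rewrite !modnD_lt //; do !case: ifP; lia.
Qed.

Lemma height_cshift k u t j : 0 < N ->
  height k (cshift u t) j =
  (sheight k u t (zero_pos u t + j) - sheight k u t (zero_pos u t))%R.
Proof.
move=> N_gt0; elim: j => [|j IH]; first by rewrite /height big_geq // addn0 subrr.
by rewrite height_step IH step_weight_cshift // addnS; lia.
Qed.

Lemma cdes_cshift k n u t : 0 < N -> 0 < k -> M = k * n.+1 -> cdes u = n.+1 ->
  cdes (cshift u t) = n.+1.
Proof.
move=> N_gt0 k_gt0 Mkn cdes_u.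
have := height_cshift k u t M N_gt0.
rewrite (shifted_height_mod _ (@cval_mod u) (height_mod Mkn cdes_u)) modnDr.
rewrite -(shifted_height_mod _ (@cval_mod u) (height_mod Mkn cdes_u)) subrr height_count.
move=> /eqP; rewrite subr_eq0 => /eqP [] /esym; rewrite {1}Mkn => /eqP.
by rewrite eqn_pmul2l // => /eqP.
Qed.

Local Notation zpos u := (fun s => nat_of_ord (zero_pos u s)).

(* Read from position [zero_pos u t] on, the shifted height is the height of
   [cshift u t]; it stays positive iff that position is the strict minimum. *)
Lemma cballot_cshift k n u t : 0 < N -> M = k * n.+1 -> cdes u = n.+1 ->
  cballot k (cshift u t) = strict_min_at M k (cval u) (height k u) (zpos u) t.
Proof.
move=> N_gt0 Mkn cdes_u.
have sh_mod := shifted_height_mod k (@cval_mod u) (height_mod Mkn cdes_u) t.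
have ltp := ltn_ord (zero_pos u t); set p := nat_of_ord (zero_pos u t) in ltp *.
have walk j : height k (cshift u t) j = (sheight k u t ((p + j) %% M) - sheight k u t p)%R.
  by rewrite height_cshift // -sh_mod.
have p_add x : x < M -> x != p -> exists2 j, 0 < j < M & (p + j) %% M = x.
  move=> ltx neq_xp; have [ltpx|lexp] := ltnP p x.
    by exists (x - p); [lia | rewrite subnKC ?modn_small // ltnW].
  exists (x + M - p); first by lia.
  by rewrite (_ : p + (x + M - p) = x + M) ?modnDr ?modn_small //; lia.
apply/forallP/forallP.
- move=> pos_walk x; apply/implyP => neq_xp.
  have [j /andP [j_gt0 ltj] <-] := p_add x (ltn_ord x) neq_xp.
  by move: (pos_walk (Ordinal ltj)); rewrite /= j_gt0 walk subr_gt0.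
- move=> strict [j ltj]; apply/implyP => /= j_gt0.
  have ltx : (p + j) %% M < M by rewrite ltn_mod.
  rewrite walk subr_gt0; apply: (implyP (strict (Ordinal ltx))) => /=.
  by rewrite modnD_lt //; case: ifP; lia.
Qed.

Lemma sum_cballot_cshift k n u : 0 < N -> 0 < k -> M = k * n.+1 -> cdes u = n.+1 ->
  \sum_(t < M) (cballot k (cshift u t) : nat) = k.
Proof.
move=> N_gt0 k_gt0 Mkn cdes_u.
under eq_bigr => t _ do rewrite (cballot_cshift t N_gt0 Mkn cdes_u).
apply: sum_strict_min_at => //.
- exact: cval_lt.
- exact: cval_mod.
- exact: cval_inj.
- exact: height_step.
- exact: height_mod Mkn cdes_u.
- exact: cval_zero_pos.
Qed.

Definition rooted_cdes n : {set 'S_M} :=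
  [set u : 'S_M | (u ord0 == ord0) && (cdes u == n.+1)].

Lemma card_cballot_rooted_cdes k n : 0 < N -> 0 < k -> M = k * n.+1 ->
  M * #|[set u in rooted_cdes n | cballot k u]| = k * #|rooted_cdes n|.
Proof.
move=> N_gt0 k_gt0 Mkn; set E := rooted_cdes n.
have cshiftE t : {in E, forall u, cshift u t \in E}.
  move=> u; rewrite !inE cshift0 eqxx => /andP [_ /eqP cdes_u].
  by rewrite (cdes_cshift t N_gt0 k_gt0 Mkn cdes_u) eqxx.
have cshift_injE t : {in E &, injective (cshift ^~ t)}.
  by move=> u v; rewrite !inE => /andP [/eqP u0 _] /andP [/eqP v0 _]; apply: cshift_inj.
have -> : #|[set u in E | cballot k u]| = \sum_(u in E) (cballot k u : nat).
  by rewrite -sum1dep_card big_mkcondr; apply: eq_bigr => u _; case: cballot.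
rewrite -[X in X * _](card_ord M) -sum_nat_const.
under eq_bigr => t _ do rewrite -(sum_in_bij _ (cshiftE t) (cshift_injE t)).
rewrite exchange_big /= mulnC -sum_nat_const.
by apply: eq_bigr => u; rewrite inE => /andP [_ /eqP]; apply: sum_cballot_cshift.
Qed.

End CyclicPermutations.

Section LiftZero.

Variable N : nat.
Implicit Types (w : 'S_N) (u : 'S_N.+1).

Definition lift0_perm w : 'S_N.+1 := lift_perm ord0 ord0 w.

Lemma lift0_perm_inj : injective lift0_perm.
Proof.
move=> w1 w2 eq_w; apply/permP => i; apply: (@lift_inj _ ord0).
by rewrite -!(lift_perm_lift ord0) -/(lift0_perm _) eq_w.
Qed.

Definition unlift0_fun u (i : 'I_N) : 'I_N := odflt i (unlift (u ord0) (u (lift ord0 i))).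

Lemma unlift0_funK u i : lift (u ord0) (unlift0_fun u i) = u (lift ord0 i).
Proof.
have neq_u0 : u ord0 != u (lift ord0 i) by rewrite (inj_eq perm_inj) neq_lift.
by case: (unlift_some neq_u0) => j lift_j unlift_j; rewrite /unlift0_fun unlift_j.
Qed.

Lemma unlift0_fun_inj u : injective (unlift0_fun u).
Proof.
move=> i j eq_ij; apply: (@lift_inj _ ord0); apply: (@perm_inj _ u).
by rewrite -!unlift0_funK eq_ij.
Qed.

Lemma lift0_perm_unlift u : u ord0 = ord0 -> lift0_perm (perm (@unlift0_fun_inj u)) = u.
Proof.
move=> u0; apply/permP => x; have [i ->|->] := unliftP ord0 x.
  by rewrite lift_perm_lift permE -[in LHS]u0 unlift0_funK.
by rewrite lift_perm_id u0.
Qed.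

Lemma card_lift0_perm (P : pred 'S_N) (Q : pred 'S_N.+1) :
  (forall w, Q (lift0_perm w) = P w) -> (forall u, Q u -> u ord0 = ord0) ->
  #|[set w | P w]| = #|[set u | Q u]|.
Proof.
move=> QP Q_u0; rewrite -(card_imset _ lift0_perm_inj); apply: eq_card => u.
rewrite inE; apply/imsetP/idP => [[w] | Qu]; first by rewrite inE -QP => Pw ->.
have u0 := Q_u0 u Qu.
by exists (perm (@unlift0_fun_inj u)); rewrite ?inE -?QP lift0_perm_unlift.
Qed.

End LiftZero.

Lemma size_word N (w : 'S_N) : size (word w) = N.
Proof. by rewrite size_map size_enum_ord. Qed.

Lemma size_ad_word N (w : 'S_N) : size (ad (word w)) = N.-1.
Proof. by rewrite size_map size_iota size_word. Qed.

Lemma nth_word N (w : 'S_N) i (lt_iN : i < N) : nth 0 (word w) i = val (w (Ordinal lt_iN)).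
Proof.
rewrite /word (nth_map (Ordinal lt_iN)) ?size_enum_ord //.
by congr (val (w _)); apply: val_inj; rewrite /= nth_enum_ord.
Qed.

Lemma cval_lift0_0 N (w : 'S_N) : cval (lift0_perm w) 0 = 0.
Proof.
by rewrite /cval (_ : inZp 0 = ord0) ?lift_perm_id //; apply: val_inj.
Qed.

Lemma cval_lift0_S N (w : 'S_N) i : i < N ->
  cval (lift0_perm w) i.+1 = (nth 0 (word w) i).+1.
Proof.
move=> lt_iN; rewrite /cval (_ : inZp i.+1 = lift ord0 (Ordinal lt_iN)).
  by rewrite lift_perm_lift (nth_word _ lt_iN).
by apply: val_inj; rewrite /= modn_small.
Qed.

Lemma cval_lift0_top N (w : 'S_N) : cval (lift0_perm w) N.+1 = 0.
Proof. by rewrite cval_mod modnn cval_lift0_0. Qed.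

Lemma ad_word N (w : 'S_N) :
  ad (word w) = [seq cdescent (lift0_perm w) i.+1 | i <- iota 0 N.-1].
Proof.
rewrite /ad size_word; apply/eq_in_map => i; rewrite mem_iota add0n => /andP [_ lt_i].
by rewrite /cdescent !cval_lift0_S ?ltnS //; lia.
Qed.

Lemma cdes_lift0 N (w : 'S_N.+1) : cdes (lift0_perm w) = (des w).+1.
Proof.
rewrite /des /cdes ad_word count_map.
have -> : iota 0 N.+2 = 0 :: rcons (iota 1 N) N.+1.
  by rewrite (iotaD 0 1 N.+1) -cats1 -(addn1 N) iotaD /= add0n addnC.
rewrite /= -cats1 count_cat /= {1 3}/cdescent.
rewrite cval_lift0_0 cval_lift0_top !cval_lift0_S //= add0n addn0 addn1.
by rewrite -(addn0 1) iotaDl count_map; congr (_.+1); apply: eq_count.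
Qed.

Lemma ballotE r b :
  ballot r b = [forall j : 'I_(size b).+1, r.+1 * count id (take j b) <= j].
Proof.
apply: eq_forallb => j; have := count_predC id (take j b).
rewrite size_takel -1?ltnS ?ltn_ord // mulSn.
have -> : count negb (take j b) = count (predC id) (take j b) by apply: eq_count.
by move=> count_j; apply/idP/idP; lia.
Qed.

Lemma height_lift0 k N (w : 'S_N.+1) j : j <= N ->
  height k (lift0_perm w) j.+1 = (j.+1%:Z - (k * count id (take j (ad (word w))))%:Z)%R.
Proof.
move=> le_jN; rewrite height_count ad_word -map_take take_iota (minn_idPl le_jN) count_map.
congr (_ - (k * _)%:Z)%R; rewrite /= {1}/cdescent cval_lift0_0 /=.
by rewrite -(addn0 1) iotaDl count_map; apply: eq_count.
Qed.

Lemma ballot_lift0 k N (w : 'S_N.+1) : 0 < k ->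
  ballot (k - 1) (ad (word w)) = cballot k (lift0_perm w).
Proof.
move=> k_gt0; rewrite ballotE subn1 prednK //.
have size_b : size (ad (word w)) = N by rewrite size_ad_word.
apply/forallP/forallP => [ballot_w [[|j] ltj] | pos_w j] //=.
  have ltjN : j < (size (ad (word w))).+1 by lia.
  by have := ballot_w (Ordinal ltjN); rewrite height_lift0 /=; lia.
have ltj : j.+1 < N.+2 by have := ltn_ord j; lia.
by have := pos_w (Ordinal ltj); rewrite /= height_lift0; lia.
Qed.

Lemma ballot0 b : ballot 0 b.
Proof. by apply/forallP => j; rewrite mul0n. Qed.

Lemma card_ballot_des k n N : 0 < k -> N.+1 = k * n.+1 ->
  n.+1 * #|[set w : 'S_N | (des w == n) && ballot (k - 1) (ad (word w))]| = eulerian n N.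
Proof.
move=> k_gt0; case: N => [|N] Mkn.
  have /andP [/eqP k1 /eqP [n0]] : (k == 1) && (n.+1 == 1) by rewrite -muln_eq1 -Mkn.
  by rewrite k1 n0 mul1n; apply: eq_card => w; rewrite !inE ballot0 andbT.
have card_ballot : #|[set w : 'S_N.+1 | (des w == n) && ballot (k - 1) (ad (word w))]| =
    #|[set u in rooted_cdes N.+1 n | cballot k u]|.
  apply: card_lift0_perm => [w | u]; last by rewrite !inE => /andP [/andP [/eqP ->]].
  by rewrite !inE lift_perm_id eqxx cdes_lift0 eqSS ballot_lift0.
have card_des : #|[set w : 'S_N.+1 | des w == n]| = #|rooted_cdes N.+1 n|.
  apply: card_lift0_perm => [w | u /andP [/eqP -> //]].
  by rewrite lift_perm_id eqxx cdes_lift0 eqSS.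
rewrite /eulerian card_ballot card_des.
apply/eqP; rewrite -(eqn_pmul2l k_gt0) mulnA -Mkn.
exact/eqP/card_cballot_rooted_cdes.
Qed.

Lemma lpathE b :
  lpath b = [seq (count negb (take j b), count id (take j b)) | j <- iota 0 (size b).+1].
Proof. by rewrite /lpath /= take0. Qed.

Lemma dyckE n (w : 'S_(2 * n + 1)) : dyck w = (des w == n) && ballot 1 (ad (word w)).
Proof.
rewrite /dyck /des lpathE; set b := ad (word w).
have size_b : size b = 2 * n by rewrite /b size_ad_word; lia.
have count_b := count_predC id b.
have count_neg : count negb b = count (predC id) b by apply: eq_count.
congr (_ && _).
  rewrite -(addn1 (size b)) iotaD map_cat /= last_cat /= take_size xpair_eqE.
  by apply/andP/eqP => [[_ /eqP //] | count_n]; split; apply/eqP; lia.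
rewrite all_map /ballot; apply/allP/forallP => [path_below j | ballot_b j].
  by have := path_below j; rewrite mem_iota /= ltn_ord mul1n; apply.
by rewrite mem_iota add0n /= => ltj; have := ballot_b (Ordinal ltj); rewrite mul1n.
Qed.

Theorem mainTheorem5 :
  (forall k n : nat, 0 < k ->
     n.+1 * #|[set w : 'S_(k * n + k - 1) | (des w == n) && ballot (k - 1) (ad (word w))]|
     = eulerian n (k * n + k - 1))
  /\
  (forall n : nat,
     n.+1 * #|[set w : 'S_(2 * n + 1) | dyck w]| = eulerian n (2 * n + 1)).
Proof.
split=> [k n k_gt0 | n].
  by apply: card_ballot_des => //; rewrite mulnS; lia.
rewrite -(@card_ballot_des 2 n) //; last by lia.
by congr (_ * _); apply: eq_card => w; rewrite !inE dyckE.
Qed.
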